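(* Consider the $\mathrm{Top}\text{-}\ell$ version of fault-tolerant ordered $k$-median, fix an optimal solution with optimal value $\mathsf{OPT}$, and let $T_\ell=\vec{\xi}^\downarrow_\ell$ be the $\ell$-th largest individual connection distance in that optimal solution. Then the following linear program (Top-LP), in variables $x_{ij}$ ($i\in\mathcal{F},j\in\mathcal{C}$), $y_i$ ($i\in\mathcal{F}$), $R_\ell$, is feasible and its optimal value satisfies $R_\ell\le\mathsf{OPT}$: minimize $R_\ell\geq0$ subject to $\sum_{j\in\mathcal{C}}\sum_{i\in\mathcal{F}}x_{ij}\mathcal{L}_{1.001\cdot T_\ell}(i,j)\le R_\ell$; $\sum_{j\in S}\sum_{i\in\mathcal{F}}x_{ij}d(i,j)\le R_\ell$ for all $S\subseteq\mathcal{C}$ with $|S|=\ell$; $\sum_{i\in\mathcal{F}}x_{ij}=r_j$ for all $j\in\mathcal{C}$; $\sum_{i\in\mathcal{F}}y_i=k$; $0\le x_{ij}\le y_i\le1$ for all $i\in\mathcal{F},j\in\mathcal{C}$.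
   Context: Fault-tolerant ordered $k$-median: given finite facility set $\mathcal{F}$, finite client set $\mathcal{C}$ with $n=|\mathcal{C}|$, a metric $d$ on $\mathcal{F}\cup\mathcal{C}$, $k\in\mathbb{Z}_+$, requirements $r_j\in\mathbb{Z}_+$ for $j\in\mathcal{C}$, and a non-increasing non-negative $w\in\mathbb{R}^n$. A solution opens a set $F\subseteq\mathcal{F}$ of at most $k$ facilities; each client $j$ is connected to its $r_j$ nearest (distinct) open facilities, with service cost $d_{r_j}(j,F)=\min_{S'\subseteq F,|S'|=r_j}\sum_{i\in S'}d(i,j)$; the objective is $w^\top\vec{c}^\downarrow$ with $\vec{c}=(d_{r_j}(j,F):j\in\mathcal{C})$ sorted non-increasingly. In the $\mathrm{Top}\text{-}\ell$ version ($\ell\in[n]$), $w$ consists of $\ell$ ones followed by zeros, so the objective is the sum of the $\ell$ largest service costs. The individual connection cost vector $\vec{\xi}$ of a solution is the vector of distances $d(i,j)$ over all pairs where client $j$ is connected to facility $i$; $\vec{\xi}^\downarrow$ is it sorted non-increasingly. For $T\geq0$, $\mathcal{L}_T(i,j)=d(i,j)$ if $d(i,j)\geq T$ and $0$ otherwise. *)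

From HB Require Import structures.
From mathcomp Require Import all_boot all_order all_algebra.
Set Implicit Arguments. Unset Strict Implicit. Unset Printing Implicit Defensive.
Import Order.TTheory GRing.Theory Num.Theory.
Local Open Scope ring_scope.

Definition is_metric (R : realFieldType) (X : Type) (d : X -> X -> R) : Prop :=
  [/\ forall x y, 0 <= d x y,
      forall x y, d x y = 0 <-> x = y,
      forall x y, d x y = d y x
    & forall x y z, d x z <= d x y + d y z].

Section Defs.
Variables (R : realFieldType) (I J : finType) (d : I + J -> I + J -> R).

Definition dfc (i : I) (j : J) : R := d (inl i) (inr j).

(* The iterated min is seeded with sum_{i in F} d(i,j), which (distances being
   nonnegative) is >= every candidate, so when some S' exists (r <= |F|) this is
   exactly the minimum over the candidates. *)
Definition serv_cost (F : {set I}) (r : nat) (j : J) : R :=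
  \big[Num.min/(\sum_(i in F) dfc i j)]_(S : {set I} | (S \subset F) && (#|S| == r))
     \sum_(i in S) dfc i j.

Definition feasible_sol (k : nat) (r : J -> nat) (F : {set I}) : Prop :=
  (#|F| <= k)%N /\ forall j, (r j <= #|F|)%N.

Definition sort_desc (s : seq R) : seq R := sort (fun a b => b <= a) s.

Definition ordered_cost (w : nat -> R) (r : J -> nat) (F : {set I}) : R :=
  \sum_(t < #|J|) w t * nth 0 (sort_desc [seq serv_cost F (r j) j | j <- enum J]) t.

Definition top_w (l : nat) : nat -> R := fun t => if (t < l)%N then 1 else 0.

Definition is_optimal (k : nat) (r : J -> nat) (w : nat -> R) (F : {set I}) : Prop :=
  feasible_sol k r F /\
  forall F', feasible_sol k r F' -> ordered_cost w r F <= ordered_cost w r F'.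

Definition valid_connection (r : J -> nat) (F : {set I}) (sigma : J -> {set I}) : Prop :=
  forall j, [/\ sigma j \subset F, #|sigma j| = r j
              & \sum_(i in sigma j) dfc i j = serv_cost F (r j) j].

Definition conn_vec_desc (sigma : J -> {set I}) : seq R :=
  sort_desc [seq dfc p.1 p.2 | p <- enum [pred p : I * J | p.1 \in sigma p.2]].

Definition xi_desc (sigma : J -> {set I}) (l : nat) : R :=
  nth 0 (conn_vec_desc sigma) l.-1.

Definition LT (T : R) (i : I) (j : J) : R := if T <= dfc i j then dfc i j else 0.

Definition topLP_feasible (k l : nat) (r : J -> nat) (T : R)
    (x : I -> J -> R) (y : I -> R) (Rl : R) : Prop :=
  0 <= Rl /\
  [/\ \sum_(j : J) \sum_(i : I) x i j * LT T i j <= Rl,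
      forall S : {set J}, #|S| = l -> \sum_(j in S) \sum_(i : I) x i j * dfc i j <= Rl,
      forall j, \sum_(i : I) x i j = (r j)%:R,
      \sum_(i : I) y i = k%:R
    & forall i j, [/\ 0 <= x i j, x i j <= y i & y i <= 1]].

End Defs.

From HB Require Import structures.
From mathcomp Require Import all_boot all_order all_algebra.
From mathcomp Require Import lra zify.
Set Implicit Arguments. Unset Strict Implicit. Unset Printing Implicit Defensive.
Import Order.TTheory GRing.Theory Num.Theory.
Local Open Scope ring_scope.

(* The optimal solution itself is feasible for (Top-LP) with R_l = OPT: put
   x_ij = 1 iff j is connected to i, open Fopt fully and spread the remaining
   budget k - |Fopt| evenly over the other facilities. Any l clients cost at
   most the sum of the l largest service costs, which is OPT. For the first
   constraint, L_{1.001 T_l} only charges connections strictly longer than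
   T_l = xi_l, and fewer than l connections are strictly longer than the l-th
   largest one; so that sum is again the cost of fewer than l clients. *)

Section SortDesc.
Variable R : realFieldType.

Lemma sort_desc_sorted (s : seq R) : sorted (fun a b => b <= a) (sort_desc s).
Proof. by apply: sort_sorted => a b; exact: le_total. Qed.

Lemma nth_sort_desc_le (s : seq R) i j : (i <= j < size (sort_desc s))%N ->
  nth 0 (sort_desc s) j <= nth 0 (sort_desc s) i.
Proof.
move=> /andP[ij js]; apply: (sorted_leq_nth _ _ _ (sort_desc_sorted s)) => //.
- by move=> a b c /= ba cb; exact: le_trans cb ba.
- by rewrite inE (leq_ltn_trans ij js).
Qed.

Lemma count_gt_nth_sort_desc (s : seq R) m :
  (count (fun v => (nth 0 (sort_desc s) m < v)%R) s <= m)%N.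
Proof.
rewrite -(count_sort (fun a b : R => b <= a)) -/(sort_desc s); set th := nth 0 _ m.
rewrite -(cat_take_drop m (sort_desc s)) count_cat.
have -> : count (fun v => th < v) (drop m (sort_desc s)) = 0%N.
  apply/eqP; rewrite -leqn0 leqNgt -has_count; apply/hasPn => v /(nthP 0) [t].
  rewrite size_drop nth_drop => t_lt <-; rewrite -leNgt nth_sort_desc_le //.
  by rewrite leq_addr -ltn_subRL; exact: t_lt.
by rewrite addn0 (leq_trans (count_size _ _)) // size_take_min geq_minl.
Qed.

Lemma top_sum_threshold (s : seq R) l : (0 < l <= size s)%N ->
  let th := nth 0 (sort_desc s) l.-1 in
  \sum_(t < size s) top_w R l t * nth 0 (sort_desc s) t =
  \sum_(v <- s) Num.max (v - th) 0 + th *+ l.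
Proof.
move=> /andP[l_gt0 ls] th; set s' := sort_desc s.
have size_s' : size s' = size s by rewrite size_sort.
pose g v := Num.max (v - th) 0.
rewrite -(big_mkord xpredT (fun t => top_w R l t * nth 0 s' t)).
rewrite (@big_cat_nat _ _ _ l 0 (size s)) //=.
rewrite (eq_big_nat _ _ (F2 := fun t => g (nth 0 s' t) + th)); last first.
  move=> t /andP[_ tl]; rewrite /top_w tl mul1r /g max_l ?subrK // subr_ge0.
  by apply: nth_sort_desc_le; rewrite size_s'; lia.
rewrite [X in _ + X](eq_big_nat _ _ (F2 := fun t => g (nth 0 s' t))); last first.
  move=> t /andP[lt ts]; rewrite /top_w ltnNge lt mul0r /g max_r // subr_le0.
  by apply: nth_sort_desc_le; rewrite size_s'; lia.
rewrite big_split /= sumr_const_nat subn0 addrAC -big_cat_nat //= -size_s'.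
by rewrite -(big_nth 0 xpredT g) (perm_big _ (permEl (perm_sort _ _))).
Qed.

Lemma sum_le_top_sum (J : finType) (f : J -> R) l (Q : {set J}) :
  (forall j, 0 <= f j) -> (0 < l <= #|J|)%N -> (#|Q| <= l)%N ->
  \sum_(j in Q) f j <=
  \sum_(t < #|J|) top_w R l t * nth 0 (sort_desc [seq f j | j <- enum J]) t.
Proof.
move=> f_ge0 lJ Ql; set s := [seq f j | j <- enum J].
have size_s : size s = #|J| by rewrite size_map -cardE.
rewrite -size_s top_sum_threshold ?size_s //=; set th := nth 0 _ l.-1.
have th_ge0 : 0 <= th.
  have : th \in sort_desc s by apply: mem_nth; rewrite size_sort size_s; lia.
  by rewrite mem_sort => /mapP [j _ ->].
rewrite big_map big_enum /=.
apply: (@le_trans _ _ (\sum_(j in Q) (Num.max (f j - th) 0 + th))).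
  by apply: ler_sum => j _; rewrite -lerBlDr le_max lexx.
rewrite big_split /= sumr_const; apply: lerD.
  rewrite [leRHS](bigID (mem Q)) /= lerDl.
  by apply: sumr_ge0 => j _; rewrite le_max lexx orbT.
by rewrite -(subnKC Ql) mulrnDr lerDl mulrn_wge0.
Qed.

End SortDesc.

Lemma fractional_opening (R : realFieldType) (I : finType) (F : {set I}) (k : nat) :
  (#|F| <= k <= #|I|)%N ->
  exists y : I -> R,
    [/\ forall i, i \in F -> y i = 1, forall i, 0 <= y i <= 1 & \sum_i y i = k%:R].
Proof.
move=> /andP[Fk kI].
have card_closed : #|[predC F]| = (#|I| - #|F|)%N by rewrite -(cardC F) addKn.
pose c : R := (k - #|F|)%:R / (#|I| - #|F|)%:R.
exists (fun i => if i \in F then 1 else c); split.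
- by move=> i ->.
- move=> i; case: ifP => _; rewrite ?ler01 ?lexx //.
  rewrite divr_ge0 //= /c; have [->|closed_gt0] := posnP (#|I| - #|F|).
    by rewrite invr0 mulr0.
  by rewrite ler_pdivrMr ?ltr0n // mul1r ler_nat; lia.
rewrite (bigID (mem F)) /= (eq_bigr (fun=> 1)) => [|i ->] //.
rewrite (eq_bigr (fun=> c)) => [|i /negbTE ->] //.
rewrite !sumr_const card_closed.
have [closed0|closed_gt0] := posnP (#|I| - #|F|).
  by rewrite closed0 mulr0n addr0; congr _%:R; lia.
by rewrite -[X in _ + X]mulr_natr /c mulfVK ?pnatr_eq0 -?lt0n // -natrD subnKC.
Qed.

Lemma sum_indicator (R : pzSemiRingType) (I : finType) (A : {set I}) (h : I -> R) :
  \sum_i (i \in A)%:R * h i = \sum_(i in A) h i.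
Proof.
rewrite [RHS]big_mkcond; apply: eq_bigr => i _.
by case: (i \in A); rewrite ?mul1r ?mul0r.
Qed.

Section TopLP.
Variables (R : realFieldType) (I J : finType) (d : I + J -> I + J -> R).
Hypothesis dfc_ge0 : forall i j, 0 <= dfc d i j.

Lemma LT_le T i j : LT d T i j <= dfc d i j.
Proof. by rewrite /LT; case: ifP. Qed.

(* The factor [c > 1] (the paper's 1.001) is what makes [L_{cT}] vanish also
   on distances equal to [T]. *)
Lemma LT_scale_eq0 T c i j : 0 <= T -> 1 < c -> dfc d i j <= T -> LT d (c * T) i j = 0.
Proof.
move=> T_ge0 c_gt1 dT; rewrite /LT; case: ifP => // cTd.
by apply/eqP; rewrite eq_le; apply/andP; split; nra.
Qed.

Lemma xi_desc_ge0 sigma l : 0 <= xi_desc d sigma l.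
Proof.
rewrite /xi_desc; set s := conn_vec_desc d sigma.
have [lt_s|] := ltnP l.-1 (size s); last by move=> ?; rewrite nth_default.
by move: (mem_nth 0 lt_s); rewrite mem_sort => /mapP [p _ ->].
Qed.

Definition long_clients (sigma : J -> {set I}) (T : R) : {set J} :=
  [set j | [exists i in sigma j, T < dfc d i j]].

Lemma card_long_clients sigma l :
  (#|long_clients sigma (xi_desc d sigma l)| <= l.-1)%N.
Proof.
set T := xi_desc d sigma l.
pose conn := [pred p : I * J | p.1 \in sigma p.2].
pose long := [set p : I * J | conn p && (T < dfc d p.1 p.2)].
have long_proj : long_clients sigma T \subset [set p.2 | p in long].
  apply/subsetP => j; rewrite inE => /existsP [i /andP[iS Td]].
  by apply/imsetP; exists (i, j); rewrite // inE /= iS Td.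
have card_long : #|long| = count (fun v => T < v) [seq dfc d p.1 p.2 | p <- enum conn].
  rewrite count_map -size_filter -(card_uniqP _); last by rewrite filter_uniq ?enum_uniq.
  by apply: eq_card => p; rewrite inE mem_filter mem_enum andbC.
rewrite (leq_trans (subset_leq_card long_proj)) // (leq_trans (leq_imset_card _ _)) //.
by rewrite card_long count_gt_nth_sort_desc.
Qed.

End TopLP.

Theorem lemma4 (R : realFieldType) (I J : finType) (d : I + J -> I + J -> R)
    (k : nat) (r : J -> nat) (l : nat) (Fopt : {set I}) (sigma : J -> {set I}) :
  is_metric d ->
  (0 < k)%N -> (k <= #|I|)%N ->
  (forall j, (0 < r j)%N) ->
  (1 <= l <= #|J|)%N ->
  is_optimal d k r (top_w R l) Fopt ->
  valid_connection d r Fopt sigma ->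
  exists (x : I -> J -> R) (y : I -> R) (Rl : R),
    topLP_feasible d k l r ((1001%:R / 1000%:R) * xi_desc d sigma l) x y Rl /\
    Rl <= ordered_cost d (top_w R l) r Fopt.
Proof.
move=> [d_ge0 _ _ _] _ kI _ lJ [[Fk _] _] conn.
have dfc_ge0 i j : 0 <= dfc d i j by exact: d_ge0.
set OPT := ordered_cost _ _ _ _.
have costE j : serv_cost d Fopt (r j) j = \sum_(i in sigma j) dfc d i j.
  by case: (conn j).
have le_OPT (Q : {set J}) : (#|Q| <= l)%N ->
    \sum_(j in Q) \sum_(i in sigma j) dfc d i j <= OPT.
  move=> Ql; under eq_bigr do rewrite -costE.
  apply: sum_le_top_sum => // j; rewrite costE; exact: sumr_ge0.
have Fk_kI : (#|Fopt| <= k <= #|I|)%N by rewrite Fk kI.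
have [y [y_open y01 sum_y]] := fractional_opening R Fk_kI.
exists (fun i j => (i \in sigma j)%:R), y, OPT; split => //; split.
  by have := le_OPT set0; rewrite cards0 big_set0; apply.
split.
- set T := xi_desc d sigma l.
  have long_le_l : (#|long_clients d sigma T| <= l)%N.
    exact: leq_trans (card_long_clients d sigma l) (leq_pred _).
  apply: le_trans (le_OPT _ long_le_l).
  rewrite [leRHS]big_mkcond; apply: ler_sum => j _; rewrite sum_indicator //.
  case: ifPn => [_|short]; first by apply: ler_sum => i _; exact: LT_le.
  rewrite big1 // => i iS; apply: LT_scale_eq0; rewrite ?xi_desc_ge0 //; first lra.
  by move: short; rewrite inE negb_exists => /forallP /(_ i); rewrite iS -leNgt.
- move=> S card_S; apply: le_trans (le_OPT S _); last by rewrite card_S.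
  by apply: ler_sum => j _; rewrite sum_indicator.
- move=> j; under eq_bigr do rewrite -[_%:R]mulr1.
  by rewrite sum_indicator sumr_const; case: (conn j) => _ ->.
- exact: sum_y.
- move=> i j; have /andP[y_ge0 y_le1] := y01 i; split => //.
  case iS: (i \in sigma j) => //.
  by rewrite y_open //; case: (conn j) => /subsetP sub _ _; exact: sub.
Qed.
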